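(* Let $d=p$ be a prime with $p\equiv 3 \bmod 4$, and let $X$ be the cyclic shift operator $X|r\rangle=|r+1\rangle$ (indices modulo $d$). Let $|\mathbf v\rangle=(\sqrt{x_0},v_1,\dots,v_{d-1})^{\rm T}$ be a vector with $x_0=-2-\sqrt{d+1}$ (so $\sqrt{x_0}$ is purely imaginary), $|v_j|^2=1$, $v_{-j}=-v_j^*$, and of Legendre form: for $j\neq 0$, $v_j=x_1$ if $j$ is a quadratic residue modulo $p$ and $v_j=-1/x_1$ otherwise (so $x_1$ is a phase factor, $x_1^*=1/x_1$). Write $\left(\frac{j}{d}\right)$ for the Legendre symbol. If $\left(\frac{j}{d}\right)=1$ and $d\equiv 3\bmod 8$, then $$\langle \mathbf v|X^{-2j}|\mathbf v\rangle=\sum_{k=0}^{d-1}v_k^*v_{k+2j}=\frac{d-3}{2}-\frac{d-3}{4}\frac{1}{x_1^2}-\frac{d+1}{4}x_1^2+\frac{2\sqrt{x_0}}{x_1}.$$ If $\left(\frac{j}{d}\right)=1$ and $d\equiv 7\bmod 8$, then $$\langle \mathbf v|X^{-2j}|\mathbf v\rangle=\frac{d-3}{2}-\frac{d+1}{4}\frac{1}{x_1^2}-\frac{d-3}{4}x_1^2-2\sqrt{x_0}\,x_1.$$ If $\left(\frac{j}{d}\right)=-1$, the corresponding formulas are obtained by substituting $x_1\mapsto -1/x_1$ in these equations.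
   Context: Here $d=p\equiv 3\bmod 4$ prime, $X$ is the Weyl–Heisenberg shift $X|r\rangle=|r+1\rangle$ on $\mathbb C^d$ with basis indexed by integers mod $d$, and $|\mathbf v\rangle$ is an (unnormalized) almost flat ''Legendre vector'': first component $\sqrt{x_0}$ with $x_0=-2-\sqrt{d+1}$, remaining components of modulus one satisfying $v_{-j}=-v_j^*$, equal to a phase $x_1$ on quadratic residues and $-1/x_1$ on non-residues (consistent since $-1$ is a non-residue when $p\equiv 3\bmod 4$). *)

From mathcomp Require Import all_boot all_order all_algebra.
Set Implicit Arguments. Unset Strict Implicit. Unset Printing Implicit Defensive.
Import Order.TTheory GRing.Theory Num.Theory.
Local Open Scope ring_scope.

Definition qres (p j : nat) : bool :=
  (j %% p != 0)%N && [exists i : 'I_p, ((i * i) %% p == j %% p)%N].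

Definition legendre (p j : nat) : int :=
  if (j %% p == 0)%N then 0 else if qres p j then 1 else -1.

(* Legendre vector with entries indexed by integers mod p (represented by nat,
   reduced mod p): v_0 = s (a square root of x0), v_j = x1 on quadratic residues,
   v_j = -1/x1 on non-residues. *)
Definition legvec (C : numClosedFieldType) (p : nat) (s x1 : C) (k : nat) : C :=
  if (k %% p == 0)%N then s
  else if legendre p k == 1 then x1 else - x1^-1.

Definition corr (C : numClosedFieldType) (p : nat) (s x1 : C) (j : nat) : C :=
  \sum_(k < p) (legvec p s x1 k)^* * legvec p s x1 (k + 2 * j).

Definition rhs3 (C : numClosedFieldType) (p : nat) (s x : C) : C :=
  (p%:R - 3) / 2 - (p%:R - 3) / 4 * (x ^+ 2)^-1 - (p%:R + 1) / 4 * x ^+ 2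
  + 2 * s / x.

Definition rhs7 (C : numClosedFieldType) (p : nat) (s x : C) : C :=
  (p%:R - 3) / 2 - (p%:R + 1) / 4 * (x ^+ 2)^-1 - (p%:R - 3) / 4 * x ^+ 2
  - 2 * s * x.

(* Index the vector by 'F_p and let chi be the quadratic character, which Euler's
   criterion identifies with the Legendre symbol.  Away from 0 the entries are
   v_y = a + b chi(y) with a = (x1 - 1/x1)/2 and b = (x1 + 1/x1)/2, and
   conjugation replaces (sqrt x0, x1) by (- sqrt x0, 1/x1).  Expanding the
   correlation with sum_y chi(y) = 0, sum_y chi(y) chi(y + c) = -1 and
   chi(-1) = -1 gives
     <v|X^(-2j)|v> = - p a^2 - b^2 - 2 (sqrt x0 - a) (a + b chi(2j)),
   and chi(2j) = chi(2) (j/p), where chi(2) = -1 exactly when p = 3 mod 8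
   (Gauss's lemma).  The four formulas are the four sign cases. *)

From mathcomp Require Import all_boot all_order all_algebra finfield.
From mathcomp Require Import zify ring.
Set Implicit Arguments. Unset Strict Implicit. Unset Printing Implicit Defensive.
Import Order.TTheory GRing.Theory Num.Theory.
Local Open Scope ring_scope.

Section QuadraticCharacter.

Variables (F : finFieldType) (h : nat).
Hypothesis cardF : #|F| = h.*2.+1.

Lemma expf_half_sqr (x : F) : x != 0 -> (x ^+ h) ^+ 2 = 1.
Proof.
move=> x0; apply: (mulIf x0).
by rewrite mul1r -exprM -exprSr muln2 -cardF expf_card.
Qed.

Lemma expf_half_eq1VN1 (x : F) : x != 0 -> x ^+ h = 1 \/ x ^+ h = -1.
Proof.
move/expf_half_sqr/eqP; rewrite -[X in _ == X](expr1n _ 2) eqf_sqr.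
by case/orP=> /eqP; [left | right].
Qed.

Lemma exists_expf_half_neq1 : exists2 b : F, b != 0 & b ^+ h != 1.
Proof.
have h_gt0 : (0 < h)%N by have := card_finNzRing_gt1 F; rewrite cardF; case: (h).
case: (pickP [pred b : F | (b != 0) && (b ^+ h != 1)]) => [b /andP[] | all1].
  by exists b.
(* X^h - 1 has at most h roots, but F has 2h nonzero elements. *)
exfalso; have roots : all (root ('X^h - 1%:P)) (enum (predC1 (0 : F))).
  apply/allP => x; rewrite mem_enum /= rootE !hornerE => x0.
  by have := all1 x; rewrite /= [x != 0]x0 => /negbFE/eqP ->; rewrite subrr.
have nz : 'X^h - 1%:P != 0 :> {poly F} by rewrite -size_poly_eq0 size_XnsubC.
have := max_poly_roots nz roots (enum_uniq _).
rewrite size_XnsubC // -cardE cardC1 cardF /=; lia.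
Qed.

Lemma oppr1_neq1 : (-1 : F) != 1.
Proof.
have [b b0] := exists_expf_half_neq1.
by case: (expf_half_eq1VN1 b0) => ->; rewrite ?eqxx.
Qed.

Lemma euler_criterion (x : F) : x != 0 -> (x ^+ h == 1) = [exists y, y * y == x].
Proof.
move=> x0; apply/eqP/existsP => [xh1 | [y /eqP yyx]]; last first.
  have y0 : y != 0 by apply: contraNneq x0 => y0; rewrite -yyx y0 mul0r.
  by rewrite -yyx -expr2 -exprM mulnC exprM expf_half_sqr.
(* X^2 - x divides X^(2h) - 1, a factor of X^#|F| - X, which splits over F. *)
pose q : {poly F} := 'X^2 - x%:P.
have q_dvd : q %| \prod_(y : F) ('X - y%:P).
  rewrite -finField_genPoly cardF exprS -[X in _ - X]mulr1 -mulrBr dvdp_mull //.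
  have -> : 'X^(h.*2) - 1 = ('X^2) ^+ h - x%:P ^+ h.
    by rewrite -rmorphXn /= xh1 polyC1 -exprM mul2n.
  by rewrite subrXX dvdp_mulr.
have [m qE] := dvdp_prod_XsubC q_dvd.
have := eqp_size qE; rewrite size_prod_XsubC size_XnsubC //.
case rE: (mask m _) => [|y r] // _; exists y.
have : root q y by rewrite (eqp_root qE) root_prod_XsubC rE mem_head.
by rewrite rootE !hornerE subr_eq0 expr2.
Qed.

Variable R : numDomainType.

Definition qchar (x : F) : R := if x == 0 then 0 else if x ^+ h == 1 then 1 else -1.

Lemma qchar0 : qchar 0 = 0.
Proof. by rewrite /qchar eqxx. Qed.

Lemma qchar1 : qchar 1 = 1.
Proof. by rewrite /qchar oner_eq0 expr1n eqxx. Qed.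

Lemma qchar_sqr (x : F) : x != 0 -> qchar x * qchar x = 1.
Proof. by move=> x0; rewrite /qchar (negbTE x0); case: ifP; rewrite ?(mulr1, mulrNN). Qed.

Lemma qchar_eq0 (x : F) : (qchar x == 0) = (x == 0).
Proof.
rewrite /qchar; have [// | _] := eqVneq x 0; first by rewrite eqxx.
by case: ifP; rewrite ?oner_eq0 ?oppr_eq0 ?oner_eq0.
Qed.

Lemma qcharM (x y : F) : qchar (x * y) = qchar x * qchar y.
Proof.
rewrite /qchar mulf_eq0.
have [-> | x0] := eqVneq x 0; first by rewrite /= mul0r.
have [-> | y0] := eqVneq y 0; first by rewrite /= mulr0.
rewrite /= exprMn.
by case: (expf_half_eq1VN1 x0) => ->; case: (expf_half_eq1VN1 y0) => ->;
  rewrite ?(mul1r, mulr1, mulrNN) ?eqxx ?(negbTE oppr1_neq1) ?(mul1r, mulr1, mulrNN).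
Qed.

Lemma qchar_sum : \sum_x qchar x = 0.
Proof.
have [b b0 bh] := exists_expf_half_neq1.
have qb : qchar b = -1 by rewrite /qchar (negbTE b0) (negbTE bh).
have : \sum_x qchar x = - \sum_x qchar x.
  rewrite [LHS](reindex_inj (mulfI b0)) -mulN1r mulr_sumr -qb.
  by apply: eq_bigr => x _; apply: qcharM.
by move/eqP; rewrite -subr_eq0 opprK -mulr2n mulrn_eq0 => /eqP.
Qed.

Lemma qchar_shift_sum (a : F) : \sum_x qchar (x + a) = 0.
Proof. by have := qchar_sum; rewrite (reindex_inj (addIr a)). Qed.

Lemma qchar_autocorr (a : F) : a != 0 -> \sum_x qchar x * qchar (x + a) = -1.
Proof.
move=> a0; rewrite (bigD1 0) //= qchar0 mul0r add0r.
transitivity (\sum_(x | x != 0) qchar (1 + a * x^-1)).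
  apply: eq_bigr => x x0; rewrite -qcharM.
  have -> : x * (x + a) = (x * x) * (1 + a * x^-1) by field.
  by rewrite !qcharM qchar_sqr // mul1r.
have inj : injective (fun x : F => 1 + a * x^-1).
  by move=> x y /addrI/(mulfI a0)/invr_inj.
have := qchar_sum; rewrite (reindex_inj inj) (bigD1 0) //= invr0 mulr0 addr0 qchar1.
by move/eqP; rewrite addrC addr_eq0 => /eqP.
Qed.

Lemma qcharN (x : F) : odd h -> qchar (- x) = - qchar x.
Proof.
move=> oh; have qN1 : qchar (-1) = -1.
  by rewrite /qchar oppr_eq0 oner_eq0 -signr_odd oh (negbTE oppr1_neq1).
by rewrite -[in LHS]mulN1r qcharM qN1 mulN1r.
Qed.

Definition qaffine (u v w : R) (y : F) : R := u + v * qchar y + (y == 0)%:R * w.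

Lemma sum_qaffine_shift (a : F) (u1 v1 w1 u2 v2 w2 : R) : a != 0 ->
  \sum_y qaffine u1 v1 w1 y * qaffine u2 v2 w2 (y + a) =
  #|F|%:R * u1 * u2 - v1 * v2 + w1 * (u2 + v2 * qchar a) + w2 * (u1 + v1 * qchar (- a)).
Proof.
move=> a0.
have dirac (b : F) (c : R) : \sum_y (y == b)%:R * c = c.
  by rewrite (bigD1 b) //= eqxx mul1r big1 ?addr0 // => y /negbTE ->; rewrite mul0r.
have split_at_poles y : qaffine u1 v1 w1 y * qaffine u2 v2 w2 (y + a) =
    u1 * u2 + u1 * v2 * qchar (y + a) + v1 * u2 * qchar y
    + v1 * v2 * (qchar y * qchar (y + a))
    + (y == 0)%:R * (w1 * (u2 + v2 * qchar a))
    + (y == - a)%:R * (w2 * (u1 + v1 * qchar (- a))).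
  rewrite /qaffine addr_eq0.
  have [-> | y0] := eqVneq y 0.
    by rewrite eq_sym oppr_eq0 (negbTE a0) add0r qchar0 /=; ring.
  have [-> | ya] := eqVneq y (- a).
    by rewrite addNr qchar0 /=; ring.
  by rewrite /=; ring.
rewrite (eq_bigr _ (fun y _ => split_at_poles y)) !big_split /= -!mulr_sumr.
rewrite sumr_const qchar_sum qchar_shift_sum qchar_autocorr // !dirac.
ring.
Qed.

End QuadraticCharacter.

Section PrimeField.

Variable p : nat.
Hypothesis p_pr : prime p.

Lemma Fp_natr_eq m n : ((m%:R : 'F_p) == n%:R) = (m == n %[mod p])%N.
Proof.
apply/eqP/eqP => [/(congr1 val) | mn]; first by rewrite /= !val_Fp_nat.
by rewrite -Fp_nat_mod // mn Fp_nat_mod.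
Qed.

Lemma Fp_natr_eq0 m : ((m%:R : 'F_p) == 0) = (p %| m)%N.
Proof. by rewrite (dvdn_pcharf (pchar_Fp p_pr)). Qed.

Lemma sum_Fp_ord (V : nmodType) (G : 'F_p -> V) :
  \sum_(k < p) G k%:R = \sum_(y : 'F_p) G y.
Proof.
rewrite [RHS](eq_bigr (fun y : 'F_p => G (val y)%:R)) => [|y _]; last by rewrite natr_Zp.
by rewrite -!(big_mkord xpredT (fun i => G i%:R)) Fp_cast.
Qed.

Lemma qres_Fp k : qres p k = ((k%:R : 'F_p) != 0) && [exists y : 'F_p, y * y == k%:R].
Proof.
rewrite /qres Fp_natr_eq0 /dvdn; congr (_ && _).
apply/existsP/existsP => -[i].
  by rewrite -Fp_natr_eq natrM => sq; exists i%:R.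
by exists (cast_ord (Fp_cast p_pr) i); rewrite /= -Fp_natr_eq natrM natr_Zp.
Qed.

Lemma legendre_qchar (R : numDomainType) h k :
  p = h.*2.+1 -> (legendre p k)%:~R = qchar h R (k%:R : 'F_p).
Proof.
move=> ph; rewrite /legendre /qchar Fp_natr_eq0 /dvdn.
case: eqP => [// | /eqP k0].
rewrite qres_Fp Fp_natr_eq0 /dvdn k0 -(euler_criterion (h := h)) ?Fp_natr_eq0 ?card_Fp //.
by case: (_ ^+ h == 1); rewrite ?mulr1z ?mulrN1z.
Qed.

Lemma prod_odd_even_split k :
  (\prod_(i < k.*2.+1) i.+1 = (\prod_(i < k.+1) i.*2.+1) * \prod_(i < k) i.*2.+2)%N.
Proof.
elim: k => [|k IH]; first by rewrite !big_ord_recr !big_ord0.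
rewrite doubleS (big_ord_recr k.*2.+2) (big_ord_recr k.*2.+1) (big_ord_recr k.+1).
by rewrite (big_ord_recr k (fun i => i.*2.+2)) /= IH doubleS; ring.
Qed.

Lemma Fp_two_exp_half q : p = q.*2.*2.+3 -> (2 : 'F_p) ^+ q.*2.+1 = (-1) ^+ q.+1.
Proof.
(* 2^h h! is the product of the even numbers 2, ..., p - 1, and those above h
   are congruent to minus the odd numbers up to h. *)
move=> pq.
pose odds : 'F_p := \prod_(i < q.+1) (i.*2.+1)%:R.
pose evens : 'F_p := \prod_(i < q) (i.*2.+2)%:R.
have oddsE : odds * evens = \prod_(i < q.*2.+1) (i.+1)%:R.
  by rewrite /odds /evens -!natr_prod -natrM -prod_odd_even_split.
have fact_neq0 : odds * evens != 0.
  rewrite oddsE; apply/prodf_neq0 => i _; rewrite Fp_natr_eq0; apply/negP => /dvdn_leq.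
  by have := ltn_ord i; rewrite pq; lia.
apply: (mulIf fact_neq0).
have doubled : 2 ^+ q.*2.+1 * (odds * evens) = \prod_(i < q + q.+1) ((i.*2.+2)%:R : 'F_p).
  rewrite oddsE (_ : (q + q.+1 = q.*2.+1)%N); last by lia.
  have -> : (2 : 'F_p) ^+ q.*2.+1 = \prod_(i < q.*2.+1) 2 by rewrite prodr_const card_ord.
  rewrite -big_split /=.
  by apply: eq_bigr => i _; rewrite -natrM mul2n doubleS.
have upper_half :
    \prod_(i < q.+1) (((q + i).*2.+2)%:R : 'F_p) = \prod_(i < q.+1) - (i.*2.+1)%:R.
  rewrite (reindex_inj rev_ord_inj); apply: eq_bigr => i _ /=.
  apply/eqP; rewrite -addr_eq0 -natrD Fp_natr_eq0 pq; apply/dvdnP; exists 1%N.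
  by have := ltn_ord i; lia.
rewrite doubled big_split_ord /= upper_half prodrN card_ord mulrCA.
by congr (_ * _); rewrite mulrC.
Qed.

Lemma qchar_two (R : numDomainType) q :
  p = q.*2.*2.+3 -> qchar q.*2.+1 R (2 : 'F_p) = if odd q then 1 else -1.
Proof.
move=> pq; have cardF : #|'F_p| = q.*2.+1.*2.+1 by rewrite card_Fp // pq.
have two_neq0 : (2 : 'F_p) != 0 by rewrite Fp_natr_eq0 gtnNdvd // pq.
rewrite /qchar (negbTE two_neq0) Fp_two_exp_half // -signr_odd /=.
by case: (odd q); rewrite /= ?expr0 ?expr1 ?eqxx // (negbTE (oppr1_neq1 cardF)).
Qed.

End PrimeField.

Section LegendreVector.

Variable C : numClosedFieldType.

Lemma conjC_sqr_lt0 (s : C) : s ^+ 2 < 0 -> s^* = - s.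
Proof.
move=> s2; have : s^* ^+ 2 == s ^+ 2.
  by rewrite -rmorphXn /= conj_Creal ?ltr0_real.
rewrite eqf_sqr => /orP[/eqP sc | /eqP //].
by rewrite le_gtF // -realEsqr CrealE sc in s2.
Qed.

Lemma conj_legvec p (s X : C) k : s^* = - s -> X^* = X^-1 ->
  (legvec p s X k)^* = legvec p (- s) X^-1 k.
Proof.
move=> sc Xc; rewrite /legvec; case: ifP => // _.
by case: ifP => _; rewrite ?rmorphN ?fmorphV /= Xc ?invrK.
Qed.

Lemma rhs3_invN p (s X : C) : X != 0 -> rhs3 p s (- X^-1) = rhs7 p s X.
Proof. by move=> X0; rewrite /rhs3 /rhs7; field. Qed.

Lemma rhs7_invN p (s X : C) : X != 0 -> rhs7 p s (- X^-1) = rhs3 p s X.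
Proof. by move=> X0; rewrite /rhs3 /rhs7; field. Qed.

Variables (p h : nat).
Hypotheses (p_pr : prime p) (ph : p = h.*2.+1).

Definition legvec_Fp (s X : C) : 'F_p -> C :=
  qaffine h ((X - X^-1) / 2) ((X + X^-1) / 2) (s - (X - X^-1) / 2).

Lemma legvec_Fp_nat (s X : C) k : legvec p s X k = legvec_Fp s X k%:R.
Proof.
rewrite /legvec /legvec_Fp /qaffine -(legendre_qchar p_pr C k ph) Fp_natr_eq0 // /dvdn.
rewrite /legendre; case: eqP => _ /=; first by rewrite mulr0z; ring.
(* the identity also holds for X = 0, so the inverse is hidden from field *)
by case: (qres p k); rewrite /= ?mulr1z ?mulrN1z; move: X^-1 => Y; field.
Qed.

Lemma corr_Fp (s X : C) j : s^* = - s -> X^* = X^-1 ->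
  corr p s X j = \sum_(y : 'F_p) legvec_Fp (- s) X^-1 y * legvec_Fp s X (y + (2 * j)%:R).
Proof.
move=> sc Xc; rewrite /corr.
rewrite -(sum_Fp_ord p_pr (fun y => legvec_Fp (- s) X^-1 y * legvec_Fp s X (y + (2 * j)%:R))).
by apply: eq_bigr => k _; rewrite conj_legvec // !legvec_Fp_nat natrD.
Qed.

Lemma corr_legvec (s X : C) j : odd h -> s^* = - s -> X^* = X^-1 -> X != 0 ->
  (qchar h C ((2 * j)%:R : 'F_p) = 1 -> corr p s X j = rhs7 p s X) /\
  (qchar h C ((2 * j)%:R : 'F_p) = -1 -> corr p s X j = rhs3 p s X).
Proof.
move=> oh sc Xc X0; set a : 'F_p := (2 * j)%:R.
have cardF : #|'F_p| = h.*2.+1 by rewrite card_Fp.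
have corrE : a != 0 -> corr p s X j =
    - p%:R * ((X - X^-1) / 2) ^+ 2 - ((X + X^-1) / 2) ^+ 2
    - 2 * (s - (X - X^-1) / 2) * ((X - X^-1) / 2 + (X + X^-1) / 2 * qchar h C a).
  move=> a0; rewrite corr_Fp // /legvec_Fp (sum_qaffine_shift cardF) //.
  by rewrite (qcharN cardF) // card_Fp // invrK; ring.
split=> qa; (rewrite corrE; last by rewrite -(qchar_eq0 h C) qa ?oppr_eq0 oner_eq0).
- by rewrite qa /rhs7; field.
- by rewrite qa /rhs3; field.
Qed.

End LegendreVector.

Theorem lemma1 (C : numClosedFieldType) (p : nat) (s x1 : C) (j : nat) :
  prime p -> (p %% 4 = 3)%N -> `|x1| = 1 ->
  s ^+ 2 = - 2 - sqrtC (p.+1)%:R ->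
  [/\ (legendre p j = 1 -> (p %% 8 = 3)%N -> corr p s x1 j = rhs3 p s x1),
      (legendre p j = 1 -> (p %% 8 = 7)%N -> corr p s x1 j = rhs7 p s x1),
      (legendre p j = -1 -> (p %% 8 = 3)%N -> corr p s x1 j = rhs3 p s (- x1^-1))
    & (legendre p j = -1 -> (p %% 8 = 7)%N -> corr p s x1 j = rhs7 p s (- x1^-1))].
Proof.
move=> pr p4 x1_norm s2.
have [q pq] : exists q, p = q.*2.*2.+3 by exists (p %/ 4)%N; lia.
have ph : p = q.*2.+1.*2.+1 by rewrite pq.
have x1_neq0 : x1 != 0 by rewrite -normr_eq0 x1_norm oner_eq0.
have x1_conj : x1^* = x1^-1 by rewrite invC_norm x1_norm expr1n invr1 mul1r.
have s_conj : s^* = - s.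
  apply: conjC_sqr_lt0; rewrite s2 -opprD oppr_lt0 ltr_wpDr ?sqrtC_ge0 ?ler0n //.
have cardF : #|'F_p| = q.*2.+1.*2.+1 by rewrite card_Fp.
have odd_h : odd q.*2.+1 by rewrite /= odd_double.
have [corr7 corr3] := corr_legvec pr ph j odd_h s_conj x1_conj x1_neq0.
have qchar_2j t : legendre p j = t ->
    qchar q.*2.+1 C ((2 * j)%:R : 'F_p) = (if odd q then 1 else -1) * t%:~R.
  by move=> <-; rewrite natrM (qcharM cardF) (qchar_two pr C pq) (legendre_qchar pr C j ph).
have parity : odd q = (p %% 8 == 7)%N.
  have := modn2 q; rewrite pq; case: (odd q) => /= q2; apply/esym.
  - by apply/eqP; lia.
  - by apply/negbTE/eqP; lia.
split=> lj p8; have := qchar_2j _ lj.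
all: rewrite parity p8 /= ?mulr1z ?mulrN1z ?mul1r ?mulN1r ?opprK => c2j.
- exact: corr3.
- exact: corr7.
- by rewrite rhs3_invN // corr7.
- by rewrite rhs7_invN // corr3.
Qed.
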